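(* The class of data languages accepted by SAFA is not closed under homomorphism: there exist a data language $L\subseteq(\Sigma\times D)^*$ accepted by some SAFA and a homomorphism $h:(\Sigma\times D)^*\to(\Sigma\times D)^*$ such that no SAFA accepts $h(L)=\{h(w): w\in L\}$.
   Context: $D$ is a fixed countably infinite set of data values; for a finite alphabet $\Sigma$, data words are elements of $(\Sigma\times D)^*$. A homomorphism of data words is a monoid homomorphism $h:(\Sigma\times D)^*\to(\Sigma\times D)^*$, i.e. $h(\varepsilon)=\varepsilon$ and $h(uv)=h(u)h(v)$, determined by the images $h((a,d))$ of single letters. A set augmented finite automaton (SAFA) is a tuple $M=(Q,\Sigma\times D,q_0,F,H,\delta)$: $Q$ finite set of states, $q_0\in Q$ initial, $F\subseteq Q$ final, $H=\{h_1,\dots,h_m\}$ a finite collection of (names of) sets of data values, $\delta\subseteq Q\times\Sigma\times C\times OP\times Q$ with $C=\{p(h_i),\,!p(h_i)\}$, $OP=\{-\}\cup\{\mathsf{ins}(h_i)\}$. Configurations are $(q,\langle S_1,\dots,S_m\rangle)$ with $S_i\subseteq D$ finite; initially state $q_0$ and all sets empty. On reading $(a,d)$, a transition $(q,a,\alpha,op,q')$ from the current state may be taken if $\alpha=p(h_i)$ and $d\in S_i$, or $\alpha=\,!p(h_i)$ and $d\notin S_i$; then the state becomes $q'$ and if $op=\mathsf{ins}(h_j)$ the value $d$ is added to $S_j$ ($op=-$ changes nothing). A word is accepted if some run reads it entirely and ends in $F$. *)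

From mathcomp Require Import all_boot.
Set Implicit Arguments. Unset Strict Implicit. Unset Printing Implicit Defensive.

Definition data := nat.

Definition dword (Sigma : Type) := seq (Sigma * data).

Definition is_dword_hom (Sigma : Type) (h : dword Sigma -> dword Sigma) : Prop :=
  h [::] = [::] /\ forall u v, h (u ++ v) = h u ++ h v.

(* Conditions: cond_in i = p(h_i), cond_notin i = !p(h_i) *)
Inductive cond (m : nat) := cond_in of 'I_m | cond_notin of 'I_m.

(* Operations: None = '-', Some j = ins(h_j) *)
Definition op (m : nat) := option 'I_m.

Record safa (Sigma : finType) := Safa {
  st : finType;
  q0 : st;
  fin : {set st};
  nsets : nat;
  delta : st -> Sigma -> cond nsets -> op nsets -> st -> bool
    (* delta ⊆ Q x Sigma x C x OP x Q, as a (finite) relation *)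
}.

(* Configurations: a state and m finite sets of data values (as lists). *)
Definition config (Sigma : finType) (M : safa Sigma) :=
  (st M * ('I_(nsets M) -> seq data))%type.

Definition init_config (Sigma : finType) (M : safa Sigma) : config M :=
  (q0 M, fun _ => [::]).

Definition cond_holds (m : nat) (c : cond m) (S : 'I_m -> seq data) (d : data) : bool :=
  match c with
  | cond_in i => d \in S i
  | cond_notin i => d \notin S i
  end.

Definition apply_op (m : nat) (o : op m) (S : 'I_m -> seq data) (d : data)
  : 'I_m -> seq data :=
  match o with
  | None => S
  | Some j => fun i => if i == j then d :: S i else S i
  end.

Definition step (Sigma : finType) (M : safa Sigma)
  (c : config M) (x : Sigma * data) (c' : config M) : Prop :=
  exists (al : cond (nsets M)) (o : op (nsets M)),
    [/\ delta c.1 x.1 al o c'.1,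
        cond_holds al c.2 x.2 &
        c'.2 = apply_op o c.2 x.2].

Inductive run (Sigma : finType) (M : safa Sigma) : config M -> dword Sigma -> config M -> Prop :=
  | run_nil c : run c [::] c
  | run_cons c c' c'' x w : step c x c' -> run c' w c'' -> run c (x :: w) c''.

Definition accepts (Sigma : finType) (M : safa Sigma) (w : dword Sigma) : Prop :=
  exists c, run (init_config M) w c /\ c.1 \in fin M.

(* SAFA languages are generic: since every set starts empty and only ever
   receives data values read from the input, an injective renaming of the
   data values of an accepted word yields an accepted word.  The language of
   all one-letter words is accepted by a SAFA, but its image under the
   homomorphism sending every data value to 0 is the singleton containing the
   one-letter word with data value 0, which is not closed under renaming. *)
From mathcomp Require Import all_boot.

Set Implicit Arguments.
Unset Strict Implicit.
Unset Printing Implicit Defensive.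

Definition relabel (Sigma : Type) (f : data -> data) (w : dword Sigma) : dword Sigma :=
  map (fun x => (x.1, f x.2)) w.

Lemma relabel_hom (Sigma : Type) (f : data -> data) :
  is_dword_hom (relabel (Sigma:=Sigma) f).
Proof. by split=> // u v; rewrite /relabel map_cat. Qed.

Section Relabel.

Variables (Sigma : finType) (M : safa Sigma) (f : data -> data).
Hypothesis f_inj : injective f.

(* Sets are related pointwise, so that no function extensionality is needed. *)
Definition relabelled (c c' : config M) : Prop :=
  c'.1 = c.1 /\ forall i, c'.2 i = map f (c.2 i).

Lemma cond_holds_relabel (al : cond (nsets M)) (S S' : 'I_(nsets M) -> seq data) d :
  (forall i, S' i = map f (S i)) -> cond_holds al S' (f d) = cond_holds al S d.
Proof. by move=> eqS; case: al => i /=; rewrite eqS mem_map. Qed.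

Lemma apply_op_relabel (o : op (nsets M)) (S S' : 'I_(nsets M) -> seq data) d i :
  (forall i, S' i = map f (S i)) ->
  apply_op o S' (f d) i = map f (apply_op o S d i).
Proof. by move=> eqS; case: o => [j|] /=; rewrite eqS //; case: (i == j). Qed.

Lemma step_relabel c x c1 c' :
  step c x c1 -> relabelled c c' ->
  exists2 c1', step c' (x.1, f x.2) c1' & relabelled c1 c1'.
Proof.
case=> al [o [dl hold eq_c1]] [eq1 eq2].
exists (c1.1, apply_op o c'.2 (f x.2)).
  by exists al, o; rewrite eq1 (cond_holds_relabel _ _ eq2).
by split=> //= i; rewrite eq_c1 (apply_op_relabel _ _ _ eq2).
Qed.

Lemma run_relabel c w c1 c' :
  run c w c1 -> relabelled c c' ->
  exists2 c1', run c' (relabel f w) c1' & relabelled c1 c1'.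
Proof.
move=> r; elim: r c' => [c0 c' rel | c0 c2 c3 x v stp _ IH c' rel].
  by exists c'; first exact: run_nil.
have [c2' st' rel2] := step_relabel stp rel.
have [c3' r' rel3] := IH _ rel2.
by exists c3'; first exact: (run_cons st' r').
Qed.

Lemma accepts_relabel w : accepts M w -> accepts M (relabel f w).
Proof.
case=> c [r c_fin].
have [c' r' [eq1 _]] := run_relabel r (conj erefl (fun _ => erefl)).
by exists c'; rewrite eq1.
Qed.

End Relabel.

Definition one_letter_safa : safa unit :=
  @Safa unit bool false [set true] 1
    (fun q _ al _ q' => if al is cond_notin _ then ~~ q && q' else false).

Lemma accepts_one_letter x : accepts one_letter_safa [:: x].
Proof.
exists (true, fun _ => [::]); split; last by rewrite inE.
apply: run_cons (run_nil _).
by exists (cond_notin ord0), None.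
Qed.

Theorem theorem9 :
  exists (Sigma : finType) (M : safa Sigma) (h : dword Sigma -> dword Sigma),
    is_dword_hom h /\
    forall M' : safa Sigma,
      ~ (forall w : dword Sigma,
           accepts M' w <-> exists u : dword Sigma, accepts M u /\ h u = w).
Proof.
exists unit, one_letter_safa, (relabel (fun _ => 0)); split.
  exact: relabel_hom.
move=> M' accM'.
have acc0 : accepts M' [:: (tt, 0)].
  by apply/accM'; exists [:: (tt, 0)]; split; first exact: accepts_one_letter.
have /accM' [u [_]] := accepts_relabel succn_inj acc0.
by case: u => [|x u] //= [].
Qed.
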